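(* Let $n$ be a positive integer and let $\log n/n \ll p = p(n) \le 1$. Let $\varepsilon > 0$ be an (arbitrarily small) constant, let $c > 0$ be a constant, and let $D = (V,E) \in \mathcal{D}(n,p)$. For a set $Y \subseteq V$, let $B_Y$ denote the set of all vertices $u \in V \setminus Y$ for which $|\deg^+_D(u,Y) - |Y|p| \ge \varepsilon |Y| p$ or $|\deg^-_D(u,Y) - |Y|p| \ge \varepsilon |Y| p$. Let $b = \max\{|B_Y| : Y \subseteq V,\ |Y| \ge cn\}$. Then a.a.s. $b \le p^{-1}\log n$.
   Context: $\mathcal{D}(n,p)$ is the random digraph on $[n]$ where each ordered pair $(u,v)$, $u\ne v$, is an arc independently with probability $p$. $\deg^+_D(u,Y)$ is the number of $y \in Y$ with $(u,y)$ an arc, $\deg^-_D(u,Y)$ the number of $y\in Y$ with $(y,u)$ an arc. a.a.s. means with probability tending to $1$ as $n\to\infty$; $f \ll g$ means $f/g \to 0$; $\log$ is natural. *)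

From HB Require Import structures.
From mathcomp Require Import all_boot all_order all_algebra.
From mathcomp Require Import all_classical all_reals all_analysis.
Set Implicit Arguments. Unset Strict Implicit. Unset Printing Implicit Defensive.
Import Order.TTheory GRing.Theory Num.Theory.
Local Open Scope ring_scope.

Definition digraph (n : nat) := {set 'I_n * 'I_n}.

(* Probability of the digraph D in D(n,p): loops have probability 0,
   each ordered pair (u,v), u <> v, is an arc independently with prob. p. *)
Definition Dnp_weight {R : realType} (n : nat) (p : R) (D : digraph n) : R :=
  if [forall i : 'I_n, (i, i) \notin D] then
    \prod_(a : 'I_n * 'I_n | a.1 != a.2) (if a \in D then p else 1 - p)
  else 0.

Definition Dnp_prob {R : realType} (n : nat) (p : R) (E : pred (digraph n)) : R :=
  \sum_(D : digraph n | E D) Dnp_weight p D.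

Definition outdeg (n : nat) (D : digraph n) (u : 'I_n) (Y : {set 'I_n}) : nat :=
  #|[set y in Y | (u, y) \in D]|.
Definition indeg (n : nat) (D : digraph n) (u : 'I_n) (Y : {set 'I_n}) : nat :=
  #|[set y in Y | (y, u) \in D]|.

Definition badset {R : realType} (n : nat) (eps p : R) (D : digraph n)
    (Y : {set 'I_n}) : {set 'I_n} :=
  [set u in ~: Y |
     (eps * #|Y|%:R * p <= `|(outdeg D u Y)%:R - #|Y|%:R * p|)
  || (eps * #|Y|%:R * p <= `|(indeg D u Y)%:R - #|Y|%:R * p|)].

(* b = max { |B_Y| : Y subset V, |Y| >= c n }  (0 if no such Y). *)
Definition bmax {R : realType} (n : nat) (eps c p : R) (D : digraph n) : nat :=
  \max_(Y : {set 'I_n} | c * n%:R <= #|Y|%:R) #|badset eps p D Y|.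

From HB Require Import structures.
From mathcomp Require Import all_boot all_order all_algebra.
From mathcomp Require Import all_classical all_reals all_analysis.
From mathcomp Require Import ring lra.
Import Order.TTheory GRing.Theory Num.Theory.
Local Open Scope ring_scope.
Set Implicit Arguments. Unset Strict Implicit. Unset Printing Implicit Defensive.

(* Split the bad vertices by direction (out/in) and sign of the deviation.  If
   b > L := p^-1 log n, some Y with |Y| >= cn has a set B, disjoint from Y, of
   more than L/4 vertices all deviating in the same direction and sign.  Summing
   over B, the number of arcs between B and Y -- a sum of |B||Y| independent
   Bernoulli(p) variables -- deviates by eps |B||Y| p, which by Chernoff has
   probability at most exp(-Omega(|B||Y|p)) = exp(-Omega(n log n)).  This beats
   the union bound over the at most 4^(n+1) choices of (Y, direction, sign, B). *)

Lemma sum_subsets_prod (R : comNzRingType) (T : finType) (W : T -> bool -> R) :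
  \sum_(S : {set T}) \prod_a W a (a \in S) = \prod_a (W a true + W a false).
Proof.
under [RHS]eq_bigr do rewrite -big_bool.
rewrite bigA_distr_bigA /= (reindex (fun f : {ffun T -> bool} => [set a | f a])) /=.
  by apply: eq_bigr => f _; apply: eq_bigr => a _; rewrite inE.
exists (fun S : {set T} => [ffun a => a \in S]) => [f _|S _].
  by apply/ffunP => a; rewrite ffunE inE.
by apply/setP => a; rewrite inE ffunE.
Qed.

Section RandomDigraph.
Variables (R : realType) (n : nat) (q : R).
Hypothesis q01 : 0 <= q <= 1.

Definition arc_weight (a : 'I_n * 'I_n) (b : bool) : R :=
  if a.1 == a.2 then (~~ b)%:R else if b then q else 1 - q.

Lemma Dnp_weightE (D : digraph n) : Dnp_weight q D = \prod_a arc_weight a (a \in D).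
Proof.
rewrite /Dnp_weight; case: ifP => [/forallP noloop|/negbT].
  rewrite [RHS](bigID (fun a : 'I_n * 'I_n => a.1 != a.2)) /=.
  rewrite [X in _ * X]big1 ?mulr1 => [|[i j] /= /negPn/eqP eij]; last first.
    by rewrite /arc_weight /= eij eqxx (negbTE (noloop j)).
  by apply: eq_bigr => a /negbTE; rewrite /arc_weight => ->.
rewrite negb_forall => /existsP [i /negPn iiD].
by rewrite (bigD1 (i, i)) //= /arc_weight /= eqxx iiD mul0r.
Qed.

Lemma Dnp_expect_prod (G : 'I_n * 'I_n -> bool -> R) :
  \sum_(D : digraph n) Dnp_weight q D * \prod_a G a (a \in D) =
  \prod_a (arc_weight a true * G a true + arc_weight a false * G a false).
Proof.
rewrite -(sum_subsets_prod (fun a b => arc_weight a b * G a b)).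
by apply: eq_bigr => D _; rewrite Dnp_weightE -big_split.
Qed.

Lemma Dnp_weight_sum1 : \sum_(D : digraph n) Dnp_weight q D = 1.
Proof.
under eq_bigr do rewrite Dnp_weightE.
rewrite sum_subsets_prod big1 // => a _; rewrite /arc_weight.
by case: ifP => _; rewrite ?add0r ?addr0 // addrC subrK.
Qed.

Lemma arc_weight_ge0 a b : 0 <= arc_weight a b.
Proof.
case/andP: q01 => q0 q1; rewrite /arc_weight.
by case: ifP; case: b => //; rewrite subr_ge0.
Qed.

Lemma Dnp_weight_ge0 (D : digraph n) : 0 <= Dnp_weight q D.
Proof. by rewrite Dnp_weightE; apply: prodr_ge0 => a _; apply: arc_weight_ge0. Qed.

Lemma Dnp_prob_ge0 (E : pred (digraph n)) : 0 <= Dnp_prob q E.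
Proof. by apply: sumr_ge0 => D _; apply: Dnp_weight_ge0. Qed.

Lemma Dnp_probC (E : pred (digraph n)) : Dnp_prob q E = 1 - Dnp_prob q (predC E).
Proof.
rewrite -Dnp_weight_sum1 /Dnp_prob [in RHS](bigID E) /=.
by rewrite [X in _ - X](eq_bigl (fun D => ~~ E D)) // addrK.
Qed.

Lemma Dnp_prob_le_sum (I : finType) (E : pred (digraph n))
    (F : I -> pred (digraph n)) :
  (forall D, E D -> exists i, F i D) -> Dnp_prob q E <= \sum_i Dnp_prob q (F i).
Proof.
move=> EF; rewrite /Dnp_prob.
under [X in _ <= X]eq_bigr do rewrite big_mkcond.
rewrite exchange_big /= big_mkcond; apply: ler_sum => D _.
have w_ge0 i : 0 <= (if F i D then Dnp_weight q D else 0).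
  by case: ifP => // _; apply: Dnp_weight_ge0.
case: ifP => [ED|_]; last by apply: sumr_ge0.
have [i Fi] := EF D ED.
by rewrite (bigD1 i) //= Fi lerDl; apply: sumr_ge0.
Qed.

Lemma Dnp_markov (E : pred (digraph n)) (f : digraph n -> R) :
  (forall D, 0 <= f D) -> (forall D, E D -> 1 <= f D) ->
  Dnp_prob q E <= \sum_(D : digraph n) Dnp_weight q D * f D.
Proof.
move=> f_ge0 Ef; rewrite /Dnp_prob big_mkcond /=; apply: ler_sum => D _.
case: ifP => [/Ef ED|_]; last by rewrite mulr_ge0 ?Dnp_weight_ge0.
by rewrite -[X in X <= _]mulr1 ler_wpM2l ?Dnp_weight_ge0.
Qed.

End RandomDigraph.

Lemma expR_mul_card (R : realType) (T : finType) (B : {set T}) (x : R) :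
  expR (x * #|B|%:R) = \prod_a (if a \in B then expR x else 1).
Proof.
rewrite -sum1_card big_mkcond natr_sum mulr_sumr expR_sum; apply: eq_bigr => a _.
by case: ifP; rewrite ?mulr1 ?mulr0 ?expR0.
Qed.

Lemma expR_le_quad (R : realType) (t : R) : t <= 1/2 -> expR t <= 1 + t + 2 * t ^+ 2.
Proof.
move=> t_le.
have e1t : expR t * (1 - t) <= 1.
  rewrite -[X in _ <= X](expRxMexpNx_1 t) ler_wpM2l ?expR_ge0 //.
  exact: expR_ge1Dx.
have t2 : 0 <= t ^+ 2 * (1 - 2 * t) by rewrite mulr_ge0 ?sqr_ge0 //; lra.
rewrite -(@ler_pM2r _ (1 - t)); last by lra.
apply: (le_trans e1t).
have -> : (1 + t + 2 * t ^+ 2) * (1 - t) = 1 + t ^+ 2 * (1 - 2 * t) by ring.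
by rewrite lerDl.
Qed.

Section Chernoff.
Variables (R : realType) (n : nat) (q : R) (A : {set 'I_n * 'I_n}).
Hypotheses (q01 : 0 <= q <= 1) (A_loopless : {in A, forall a, a.1 != a.2}).

Lemma Dnp_mgf_le (l : R) :
  \sum_(D : digraph n) Dnp_weight q D * expR (l * #|A :&: D|%:R)
  <= expR (q * (expR l - 1) * #|A|%:R).
Proof.
have expR_count D :
    expR (l * #|A :&: D|%:R) = \prod_a (if (a \in A) && (a \in D) then expR l else 1).
  by rewrite expR_mul_card; apply: eq_bigr => a _; rewrite inE.
under eq_bigr do rewrite expR_count.
rewrite (Dnp_expect_prod _ (fun a b => if (a \in A) && b then expR l else 1)).
rewrite expR_mul_card; apply: ler_prod => a _.
case/andP: q01 => q0 q1.
rewrite /arc_weight !andbT !andbF !mulr1.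
case: (boolP (a \in A)) => [aA|_]; last first.
  rewrite mulr1; case: ifP => _; first by rewrite /= add0r lexx ler01.
  by rewrite subrKC lexx ler01.
rewrite (negbTE (A_loopless aA)); apply/andP; split.
  by rewrite addr_ge0 ?subr_ge0 ?mulr_ge0 ?expR_ge0.
have -> : q * expR l + (1 - q) = 1 + q * (expR l - 1) by ring.
exact: expR_ge1Dx.
Qed.

Lemma Dnp_count_dev_tail (s : R) (b : bool) : 0 < s -> s <= 1/4 ->
  Dnp_prob q [pred D | 4 * s * (#|A|%:R * q)
                       <= (-1) ^+ b * (#|A :&: D|%:R - #|A|%:R * q)]
  <= expR (- (2 * s ^+ 2) * (#|A|%:R * q)).
Proof.
move=> s_gt0 s_le; set N := #|A|%:R * q; set l := (-1) ^+ b * s.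
have N_ge0 : 0 <= N by case/andP: q01 => q0 _; rewrite mulr_ge0.
pose K := expR (- (l * N) - 4 * s ^+ 2 * N).
apply: (le_trans (Dnp_markov q01 (f := fun D => expR (l * #|A :&: D|%:R) * K) _ _)).
- by move=> D; rewrite mulr_ge0 ?expR_ge0.
- move=> D /= dev; rewrite /K -expRD -[X in X <= _]expR0 ler_expR.
  have := ler_wpM2l (ltW s_gt0) dev; rewrite /l; lra.
under eq_bigr do rewrite mulrA.
rewrite -mulr_suml; apply: (le_trans (ler_wpM2r (expR_ge0 _) (Dnp_mgf_le l))).
rewrite /K -expRD ler_expR.
have expR_l : expR l - 1 <= l + 2 * s ^+ 2.
  have l_sq : l ^+ 2 = s ^+ 2 by rewrite /l exprMn sqrr_sign mul1r.
  have l_le : l <= 1/2.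
    by rewrite /l; case: (b); rewrite ?expr1 ?mulN1r ?expr0 ?mul1r; lra.
  by have := expR_le_quad l_le; rewrite l_sq; lra.
have -> : q * (expR l - 1) * #|A|%:R = N * (expR l - 1) by rewrite /N; ring.
have := ler_wpM2l N_ge0 expR_l; lra.
Qed.

End Chernoff.

Definition flip (T : Type) (dir : bool) (a : T * T) : T * T :=
  if dir then a else (a.2, a.1).

Lemma flipK (T : Type) dir : involutive (@flip T dir).
Proof. by case: dir => // -[]. Qed.

Section ArcsBetween.
Variable n : nat.
Implicit Types (D : digraph n) (B Y : {set 'I_n}).

(* [deg_dir true] is [outdeg] and [deg_dir false] is [indeg], by conversion. *)
Definition deg_dir dir D (u : 'I_n) Y : nat := #|[set y in Y | flip dir (u, y) \in D]|.

Definition arcs_between dir B Y : {set 'I_n * 'I_n} := flip dir @^-1: finset.setX B Y.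

Lemma card_arcs_between dir B Y : #|arcs_between dir B Y| = (#|B| * #|Y|)%N.
Proof. by rewrite card_preimset ?cardsX //; apply: inv_inj; apply: flipK. Qed.

Lemma arcs_between_loopless dir B Y :
  B \subset ~: Y -> {in arcs_between dir B Y, forall a, a.1 != a.2}.
Proof.
move=> /fintype.subsetP BY [i j]; rewrite inE; case: dir => /=;
  rewrite finset.in_setX => /andP[/BY uY vY]; apply: contraTneq vY => /= eij;
  by move: uY; rewrite inE ?eij // -eij.
Qed.

Lemma sum_deg_dir dir D B Y :
  (\sum_(u in B) deg_dir dir D u Y)%N = #|arcs_between dir B Y :&: D|.
Proof.
transitivity (\sum_u \sum_y ((u \in B) && (y \in Y) && (flip dir (u, y) \in D) : nat))%N.
  rewrite big_mkcond /=; apply: eq_bigr => u _.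
  case: (u \in B); last by rewrite big1.
  rewrite /deg_dir -sum1_card big_mkcond /=.
  by apply: eq_bigr => y _; rewrite inE; case: ifP.
rewrite pair_bigA (reindex_inj (inv_inj (@flipK _ dir))) -sum1_card [RHS]big_mkcond /=.
by apply: eq_bigr => a _; rewrite -surjective_pairing flipK !inE; case: (flip dir a).
Qed.

End ArcsBetween.

Lemma card_bigcup_le (T I : finType) (A : I -> {set T}) :
  (#|\bigcup_i A i| <= \sum_i #|A i|)%N.
Proof.
elim/big_rec2: _ => [|i k U _ IH]; first by rewrite cards0.
by rewrite (leq_trans (leq_card_setU _ _)) ?leq_add2l.
Qed.

Lemma exists_gt_card_mul (R : realDomainType) (I : finType) (x : I -> R) (L : R) :
  0 <= L -> L < \sum_i x i -> exists i, L < #|I|%:R * x i.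
Proof.
move=> L_ge0 L_lt; apply/existsP; apply: contraTT L_lt => /existsPn small.
rewrite -leNgt; have [I0|I_gt0] := posnP #|I|.
  by rewrite big_pred0 // => i; have := card0_eq I0 i.
have : \sum_i #|I|%:R * x i <= \sum_(i : I) L.
  by apply: ler_sum => i _; rewrite leNgt; apply: small.
by rewrite -mulr_sumr sumr_const -[L *+ _]mulr_natl ler_pM2l ?ltr0n.
Qed.

Section BadVertices.
Variables (R : realType) (n : nat) (eps q : R) (D : digraph n).
Implicit Types (B Y : {set 'I_n}).

Definition dev_set Y dir (b : bool) : {set 'I_n} :=
  [set u in ~: Y | eps * #|Y|%:R * q
                   <= (-1) ^+ b * ((deg_dir dir D u Y)%:R - #|Y|%:R * q)].

Lemma badset_sub_dev_sets Y :
  badset eps q D Y \subset \bigcup_(i : bool * bool) dev_set Y i.1 i.2.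
Proof.
apply/fintype.subsetP => u; rewrite !inE => /andP[uY dev].
have dev_in dir b :
    u \in dev_set Y dir b -> u \in \bigcup_(i : bool * bool) dev_set Y i.1 i.2.
  by move=> du; apply/finset.bigcupP; exists (dir, b).
rewrite !ler_normr in dev.
case/orP: dev => /orP[] dev; [apply: (dev_in true false) | apply: (dev_in true true)
  | apply: (dev_in false false) | apply: (dev_in false true)];
  by rewrite !inE uY ?expr0 ?expr1 ?mul1r ?mulN1r /=; apply: dev.
Qed.

Lemma large_dev_set (L : R) Y : 0 <= L -> L < #|badset eps q D Y|%:R ->
  exists dir b, L < 4 * #|dev_set Y dir b|%:R.
Proof.
move=> L_ge0 L_lt.
have [[dir b] /=] :
    exists i : bool * bool, L < #|{: bool * bool}|%:R * #|dev_set Y i.1 i.2|%:R.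
  apply: exists_gt_card_mul => //; rewrite -natr_sum; apply: (lt_le_trans L_lt).
  by rewrite ler_nat (leq_trans (subset_leq_card (badset_sub_dev_sets Y))) ?card_bigcup_le.
by rewrite card_prod card_bool; exists dir, b.
Qed.

Lemma dev_set_subC Y dir b : dev_set Y dir b \subset ~: Y.
Proof. by apply/fintype.subsetP => u; rewrite inE => /andP[]. Qed.

Lemma dev_set_count_dev Y dir b (B := dev_set Y dir b) (A := arcs_between dir B Y) :
  eps * (#|A|%:R * q) <= (-1) ^+ b * (#|A :&: D|%:R - #|A|%:R * q).
Proof.
have : \sum_(u in B) eps * #|Y|%:R * q
        <= \sum_(u in B) (-1) ^+ b * ((deg_dir dir D u Y)%:R - #|Y|%:R * q).
  by apply: ler_sum => u; rewrite inE => /andP[].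
rewrite /A -sum_deg_dir card_arcs_between natrM natr_sum.
rewrite -[\sum_(u in B) (-1) ^+ b * _]mulr_sumr sumrB !sumr_const.
rewrite -[eps * _ * q *+ _]mulr_natr -[#|Y|%:R * q *+ _]mulr_natr.
have -> : #|B|%:R * #|Y|%:R * q = #|Y|%:R * q * #|B|%:R by ring.
by rewrite !mulrA.
Qed.

End BadVertices.

Lemma bmax_le (R : realType) n (eps c q L : R) (D : digraph n) : 0 <= L ->
  (forall Y : {set 'I_n}, c * n%:R <= #|Y|%:R -> #|badset eps q D Y|%:R <= L) ->
  (bmax eps c q D)%:R <= L.
Proof.
move=> L_ge0 small; apply: (big_ind (fun x : nat => x%:R <= L)) => // x y hx hy.
by rewrite /maxn; case: ifP.
Qed.

Lemma card_dev_index n :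
  #|{: {set 'I_n} * bool * bool * {set 'I_n}}| = (4 ^ n.+1)%N.
Proof.
rewrite !card_prod card_bool -cardsT -powersetT card_powerset cardsT card_ord.
by rewrite expnS -[4%N]/(2 * 2)%N expnMn; ring.
Qed.

Section DeviationEvents.
Variables (R : realType) (n : nat) (c q s L : R).

Definition arc_dev_event (i : {set 'I_n} * bool * bool * {set 'I_n}) (D : digraph n) :=
  let: (Y, dir, b, B) := i in let A := arcs_between dir B Y in
  [&& c * n%:R <= #|Y|%:R, L < 4 * #|B|%:R, B \subset ~: Y &
      4 * s * (#|A|%:R * q) <= (-1) ^+ b * (#|A :&: D|%:R - #|A|%:R * q)].

Lemma bmax_gt_arc_dev_event (eps : R) (D : digraph n) :
  0 <= q -> 0 <= L -> 4 * s <= eps -> ~~ ((bmax eps c q D)%:R <= L) ->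
  exists i, arc_dev_event i D.
Proof.
move=> q_ge0 L_ge0 eps_ge bad.
have /existsP[Y /andP[Y_large Y_bad]] :
    [exists Y : {set 'I_n}, (c * n%:R <= #|Y|%:R) && (L < #|badset eps q D Y|%:R)].
  apply: contraNT bad => /existsPn small; apply: bmax_le => // Y Y_large.
  by have := small Y; rewrite Y_large /= -leNgt.
have [dir [b B_large]] := large_dev_set L_ge0 Y_bad.
exists (Y, dir, b, dev_set eps q D Y dir b).
rewrite /arc_dev_event Y_large B_large dev_set_subC /=.
apply: le_trans (dev_set_count_dev eps q D Y dir b).
by apply: ler_wpM2r; rewrite // mulr_ge0.
Qed.

Lemma Dnp_arc_dev_event_le i : 0 < q <= 1 -> 0 < s -> s <= 1/4 -> 0 <= c ->
  L = q^-1 * ln n%:R -> (0 < n)%N ->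
  Dnp_prob q (arc_dev_event i) <= expR (- (s ^+ 2 * c / 2 * (n%:R * ln n%:R))).
Proof.
case: i => [[[Y dir] b] B] /andP[q_gt0 q_le1] s_gt0 s_le c_ge0 L_def n_gt0.
have q01 : 0 <= q <= 1 by rewrite ltW.
have ln_ge0 : 0 <= ln n%:R :> R by rewrite ln_ge0 // ler1n.
rewrite /Dnp_prob /arc_dev_event.
case: (boolP (c * n%:R <= #|Y|%:R)) => Y_large; last by rewrite big_pred0.
case: (boolP (L < 4 * #|B|%:R)) => B_large; last by rewrite big_pred0.
case: (boolP (B \subset ~: Y)) => BY; last by rewrite big_pred0.
rewrite /=; apply: le_trans (Dnp_count_dev_tail q01
  (arcs_between_loopless (dir := dir) BY) b s_gt0 s_le) _.
rewrite ler_expR card_arcs_between natrM.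
have count_ge : c * n%:R * ln n%:R / 4 <= #|B|%:R * #|Y|%:R * q.
  have -> : c * n%:R * ln n%:R / 4 = c * n%:R * (ln n%:R / 4) by ring.
  have -> : #|B|%:R * #|Y|%:R * q = #|Y|%:R * (#|B|%:R * q) by ring.
  rewrite ler_pM ?mulr_ge0 ?divr_ge0 //.
  by move: B_large; rewrite L_def ltr_pdivrMl //; lra.
have := ler_wpM2l (sqr_ge0 s) count_ge; lra.
Qed.

End DeviationEvents.

Lemma Dnp_bmax_gt_le (R : realType) n (eps c q s : R) :
  0 < q <= 1 -> 0 < s -> s <= 1/4 -> 4 * s <= eps -> 0 <= c -> (0 < n)%N ->
  Dnp_prob q (predC (fun D : digraph n => (bmax eps c q D)%:R <= q^-1 * ln n%:R))
  <= (4 ^ n.+1)%:R * expR (- (s ^+ 2 * c / 2 * (n%:R * ln n%:R))).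
Proof.
move=> q01 s_gt0 s_le eps_ge c_ge0 n_gt0.
have [q_gt0 q_le1] := andP q01.
have L_ge0 : 0 <= q^-1 * ln n%:R by rewrite mulr_ge0 ?ln_ge0 ?ler1n // invr_ge0 ltW.
apply: (le_trans (Dnp_prob_le_sum (F := arc_dev_event c q s (q^-1 * ln n%:R)) _ _)).
- by rewrite ltW.
- by move=> D /=; apply: bmax_gt_arc_dev_event => //; apply: ltW.
rewrite -card_dev_index mulr_natl -sumr_const; apply: ler_sum => i _.
exact: Dnp_arc_dev_event_le.
Qed.

Local Open Scope classical_set_scope.
Local Open Scope ring_scope.

Lemma pow4_mul_expR_nlnn_lt (R : realType) (a e : R) : 0 < a -> 0 < e ->
  \forall n \near \oo, (4 ^ n.+1)%:R * expR (- (a * (n%:R * ln n%:R))) < e.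
Proof.
move=> a_gt0 e_gt0; near=> n.
have n_gt : 4 / e < n%:R by near: n; apply: nbhs_infty_gtr.
have ln_ge : 3 / a <= ln n%:R.
  have n_gt' : expR (3 / a) < n%:R by near: n; apply: nbhs_infty_gtr.
  rewrite -ler_expR lnK ?ltW // posrE; exact: lt_trans (expR_gt0 _) n_gt'.
have pow2_le : 2 ^+ n <= expR n%:R :> R.
  rewrite -[n%:R]mulr1 expRM_natl lerXn2r ?nnegrE ?expR_ge0 //.
  by have := expR_ge1Dx (1 : R); lra.
have pow4_le : (4 ^ n.+1)%:R <= 4 * (expR n%:R * expR n%:R) :> R.
  have -> : (4 ^ n.+1)%:R = 4 * (2 ^+ n * 2 ^+ n) :> R.
    by rewrite expnS natrM natrX -exprMn -natrM.
  by rewrite ler_wpM2l // ler_pM ?exprn_ge0.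
have exp_le : - (a * (n%:R * ln n%:R)) <= - (3 * n%:R).
  rewrite lerN2 mulrCA [3 * _]mulrC ler_wpM2l //.
  by rewrite mulrC -ler_pdivrMr.
apply: (le_lt_trans (ler_wpM2r (expR_ge0 _) pow4_le)).
apply: (@le_lt_trans _ _ (4 * (expR n%:R)^-1)).
  rewrite -mulrA ler_wpM2l // -expRN -!expRD ler_expR; lra.
have expR_gt : 4 / e < expR n%:R.
  by apply: (lt_le_trans n_gt); have := expR_ge1Dx (n%:R : R); lra.
by rewrite ltr_pdivrMr ?expR_gt0 // -ltr_pdivrMl // mulrC.
Unshelve. all: by end_near.
Qed.

Theorem lemma4p1 (R : realType) (p : nat -> R) (eps c : R)
  (hp01 : forall n, 0 <= p n <= 1)
  (hp : forall e : R, 0 < e ->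
          \forall n \near \oo, ln (n%:R) / n%:R <= e * p n)
  (heps : 0 < eps) (hc : 0 < c) :
  (fun n : nat =>
     Dnp_prob (p n) (fun D : digraph n =>
        (bmax eps c (p n) D)%:R <= (p n)^-1 * ln (n%:R)))
    @ \oo --> (1%R : R^o).
Proof.
(* The hypothesis on p is only used to get p n > 0: the union bound is
   exp(-Omega(n log n)) for every positive p. *)
pose s := Num.min eps 1 / 4.
have min_gt0 : 0 < Num.min eps 1 by rewrite lt_min heps ltr01.
have s_gt0 : 0 < s by rewrite divr_gt0.
have s_le : s <= 1 / 4 by rewrite ler_pM2r // ge_min lexx orbT.
have s4_le : 4 * s <= eps by rewrite mulrC divfK // ge_min lexx.
apply/cvgrPdist_lt => e e_gt0; near=> n.
have n_gt1 : (1 < n)%N by near: n; exact: nbhs_infty_gt.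
have p_gt0 : 0 < p n.
  have : ln n%:R / n%:R <= 1 * p n by near: n; exact: hp.
  by rewrite mul1r; apply: lt_le_trans; rewrite divr_gt0 ?ln_gt0 ?ltr1n ?ltr0n // ltnW.
rewrite Dnp_probC opprB addrC subrK ger0_norm ?Dnp_prob_ge0 //.
apply: le_lt_trans (Dnp_bmax_gt_le _ s_gt0 s_le s4_le (ltW hc) (ltnW n_gt1)) _.
  by case/andP: (hp01 n) => _ ->; rewrite p_gt0.
by near: n; apply: pow4_mul_expR_nlnn_lt; rewrite ?divr_gt0 ?mulr_gt0 ?exprn_gt0.
Unshelve. all: by end_near.
Qed.
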